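(* Let $X=\{X_k\}_{k\in\mathbb Z}$ be a positive strictly stationary time series satisfying Condition 1, and let $m\in\mathbb N$ be fixed. Then for every fixed $k\in\mathbb N$, $D(j,k)/\widetilde D(j,k)\xrightarrow{P}1$ as $j\to\infty$.
   Context: Setup: $\mathbb P\{X_k>x\}\sim c_Xx^{-\alpha}$ as $x\to\infty$, $\alpha>0$, $c_X>0$; $M_n:=\max_{1\le k\le n}X_k$ and $\mathbb P\{M_n\le n^{1/\alpha}x\}=\exp\{-c(n,x)x^{-\alpha}\}$, $x>0$, defines $c(n,x)>0$. Condition 1: there exist $\beta>0$, $R\in\mathbb R$, $\theta\in(0,1]$ and $c_1:(0,\infty)\to[0,\infty)$ with $c_1(x)=\mathcal O(x^{-R})$ as $x\downarrow0$, such that $|c(n,x)-\theta c_X|\le c_1(x)n^{-\beta}$ for all $x>0$ and all $n$. Block maxima: for $2^j>m$, $D(j,k):=\max_{1\le i\le 2^j}X_{2^j(k-1)+i}$ and $\widetilde D(j,k):=\max_{1\le i\le 2^j-m}X_{2^j(k-1)+i}$. *)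

From HB Require Import structures.
From mathcomp Require Import all_boot all_order all_algebra.
From mathcomp Require Import all_classical all_reals all_analysis.
Set Implicit Arguments. Unset Strict Implicit. Unset Printing Implicit Defensive.
Import Order.TTheory GRing.Theory Num.Theory.
Import numFieldNormedType.Exports.
Local Open Scope classical_set_scope.
Local Open Scope ring_scope.

Section Defs.
Context (d : measure_display) (T : measurableType d) (R : realType)
        (P : probability T R).

Definition strictly_stationary (X : int -> T -> R) : Prop :=
  forall (n : nat) (t : 'I_n -> int) (x : 'I_n -> R) (h : int),
    P (\bigcap_(i in [set: 'I_n]) [set w | X (t i + h) w <= x i]) =
    P (\bigcap_(i in [set: 'I_n]) [set w | X (t i) w <= x i]).

Definition regularly_varying_tail (Y : T -> R) (alpha cX : R) : Prop :=
  fine (P [set w | x < Y w]) / (cX * x `^ (- alpha)) @[x --> +oo] --> (1 : R).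

Definition Mmax (X : int -> T -> R) (n : nat) (w : T) : R :=
  \big[Num.max/X 1 w]_(1 <= k < n.+1) X (k%:Z) w.

Definition bigO_at0 (c1 : R -> R) (r : R) : Prop :=
  exists K delta : R, 0 < delta /\
    forall x : R, 0 < x -> x < delta -> c1 x <= K * x `^ (- r).

Definition condition1 (X : int -> T -> R) (alpha cX : R) : Prop :=
  exists c : nat -> R -> R,
    (forall n x, (0 < n)%N -> 0 < x ->
       0 < c n x /\
       fine (P [set w | Mmax X n w <= (n%:R) `^ (alpha^-1) * x]) =
         expR (- (c n x * x `^ (- alpha)))) /\
    exists (beta r theta : R) (c1 : R -> R),
      0 < beta /\ 0 < theta <= 1 /\
      (forall x, 0 < x -> 0 <= c1 x) /\ bigO_at0 c1 r /\
      forall n x, (0 < n)%N -> 0 < x ->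
        `|c n x - theta * cX| <= c1 x * (n%:R) `^ (- beta).

(* block maxima D(j,k) and tilde D(j,k) (k >= 1) *)
Definition Dblock (X : int -> T -> R) (j k : nat) (w : T) : R :=
  \big[Num.max/X ((2 ^ j * k.-1).+1)%:Z w]_(1 <= i < (2 ^ j).+1)
     X ((2 ^ j * k.-1 + i)%:Z) w.

Definition Dtblock (X : int -> T -> R) (m j k : nat) (w : T) : R :=
  \big[Num.max/X ((2 ^ j * k.-1).+1)%:Z w]_(1 <= i < (2 ^ j - m).+1)
     X ((2 ^ j * k.-1 + i)%:Z) w.

Definition cvg_in_prob (Y : nat -> T -> R) (l : R) : Prop :=
  forall eps : R, 0 < eps ->
    fine (P [set w | eps < `|Y j w - l|]) @[j --> \oo] --> (0 : R).

End Defs.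

(* Write n = 2^j - m.  The block maxima D(j,k) and D~(j,k) differ only if one
   of the m observations of block k missing from D~(j,k) exceeds D~(j,k); so
   for every level z, by stationarity,
     P{|D/D~ - 1| > eps} <= P{M_n <= z} + m P{X_1 > z}.
   Take z = n^{1/alpha} x.  Condition 1 forces c(n,x) -> theta c_X, so the first
   term is eventually below exp(-theta c_X x^{-alpha} / 2), which is small once
   x is small; for that fixed x, z -> oo and the second term vanishes. *)

From HB Require Import structures.
From mathcomp Require Import all_boot all_order all_algebra.
From mathcomp Require Import all_classical all_reals all_analysis.
From mathcomp Require Import measurable_realfun.
From mathcomp Require Import zify lra.
Set Implicit Arguments. Unset Strict Implicit. Unset Printing Implicit Defensive.
Import Order.TTheory GRing.Theory Num.Theory.
Import numFieldNormedType.Exports.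
Local Open Scope classical_set_scope.
Local Open Scope ring_scope.

(* [Dblock], [Dtblock] and [Mmax] are convertible to instances of [blockmax]. *)
Definition blockmax (R : realDomainType) (Y : nat -> R) (b n : nat) : R :=
  \big[Num.max/Y b.+1]_(1 <= i < n.+1) Y (b + i)%N.

Section blockmax.
Context (R : realDomainType) (Y : nat -> R).

Lemma blockmax_ge_first b n : Y b.+1 <= blockmax Y b n.
Proof. exact: bigmax_ge_id. Qed.

Lemma blockmax_leP b n z : (0 < n)%N ->
  blockmax Y b n <= z <-> forall i : 'I_n, Y (b + i.+1)%N <= z.
Proof.
move=> n_gt0; split=> [bz i|Yz].
  apply: le_trans bz; rewrite /blockmax; apply: (Order.TotalTheory.le_bigmax_seq _ i.+1) => //.
  by rewrite mem_index_iota /= ltnS ltn_ord.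
rewrite /blockmax big_seq; apply: bigmax_le => [|i].
  by have := Yz (Ordinal n_gt0); rewrite addn1.
rewrite mem_index_iota => /andP[i_gt0 i_le].
have i_lt : (i.-1 < n)%N by case: i i_gt0 i_le.
by have := Yz (Ordinal i_lt); rewrite prednK.
Qed.

Lemma blockmax_catr b n m z : z < blockmax Y b n ->
  (forall i, (i < m)%N -> Y (b + n + i.+1)%N <= z) ->
  blockmax Y b (n + m) = blockmax Y b n.
Proof.
move=> zb Yz; apply/le_anti/andP; split; last by rewrite le_bigmax_nat ?ltnS ?leq_addr.
rewrite /blockmax big_seq; apply: bigmax_le => [|i]; first exact: bigmax_ge_id.
rewrite mem_index_iota => /andP[i_gt0 i_le].
have [i_n|n_i] := leqP i n.
  by apply: (Order.TotalTheory.le_bigmax_seq _ i) => //; rewrite mem_index_iota i_gt0 ltnS.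
have -> : (b + i = b + n + (i - n).-1.+1)%N by lia.
by apply: le_trans (ltW zb); apply: Yz; lia.
Qed.

End blockmax.

Lemma ratio_deviation_gtE (R : realFieldType) (a b eps : R) : 0 < b ->
  (eps < `|a / b - 1|) = (eps * b < `|a - b|).
Proof.
move=> b_gt0; rewrite -{1}(divff (lt0r_neq0 b_gt0)) -mulrBl normrM normfV.
by rewrite (gtr0_norm b_gt0) ltr_pdivlMr.
Qed.

Section stationary_block_maxima.
Context d (T : measurableType d) (R : realType) (P : probability T R).
Variable X : int -> {RV P >-> R}.
Hypothesis X_stat : strictly_stationary P (fun k => X k).

Local Notation Xn w := (fun i : nat => X i%:Z w).

Let mX (i : int) : measurable_fun setT (X i). Proof. exact: measurable_funPT. Qed.

Let measurable_ltr (f g : T -> R) : measurable_fun setT f -> measurable_fun setT g ->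
  measurable [set w | f w < g w].
Proof.
by move=> mf mg; rewrite -[X in measurable X]setTI; exact: measurable_fun_ltr.
Qed.

Let measurable_ler (f g : T -> R) : measurable_fun setT f -> measurable_fun setT g ->
  measurable [set w | f w <= g w].
Proof.
by move=> mf mg; rewrite -[X in measurable X]setTI; exact: measurable_fun_ler.
Qed.

Let measurable_blockmax b n : measurable_fun setT (fun w => blockmax (Xn w) b n).
Proof.
rewrite /blockmax; elim: (index_iota _ _) => [|i s IH].
  by under eq_fun do rewrite big_nil; exact: mX.
by under eq_fun do rewrite big_cons; exact: measurable_maxr.
Qed.

Lemma stationary_tail h z : P [set w | z < X h w] = P [set w | z < X 1 w].
Proof.
have ltNle (i : int) : [set w | z < X i w] = ~` [set w | X i w <= z].
  by apply/seteqP; split => w /=; rewrite ltNge => /negP.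
rewrite !ltNle !probability_setC; try exact: measurable_ler.
congr (1 - _)%E.
have bigcap1 (i : int) :
    \bigcap_(j in [set: 'I_1]) [set w | X i w <= z] = [set w | X i w <= z].
  by apply/seteqP; split => [w /(_ ord0 I)|w Xz j _].
have := X_stat (fun _ : 'I_1 => 1) (fun _ => z) (h - 1).
by rewrite addrC subrK !bigcap1.
Qed.

Lemma bigcap_blockmax_le b n z : (0 < n)%N ->
  \bigcap_(i in [set: 'I_n]) [set w | X (i.+1%:Z + b%:Z) w <= z] =
  [set w | blockmax (Xn w) b n <= z].
Proof.
move=> n_gt0; apply/seteqP; split => w /=.
  by move=> Xz; apply/blockmax_leP => // i; rewrite addnC PoszD; exact: Xz.
by move=> /blockmax_leP-/(_ n_gt0) Xz i _; rewrite -PoszD addnC; exact: Xz.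
Qed.

Lemma stationary_blockmax_le b n z : (0 < n)%N ->
  P [set w | blockmax (Xn w) b n <= z] = P [set w | Mmax (fun k => X k) n w <= z].
Proof.
move=> n_gt0; have := X_stat (fun i : 'I_n => i.+1%:Z) (fun _ => z) b%:Z.
rewrite bigcap_blockmax_le // => ->.
by rewrite -[in RHS](bigcap_blockmax_le 0).
Qed.

Hypothesis X_pos : forall k w, 0 < X k w.

Let fine_probK (A : set T) : measurable A -> (fine (P A))%:E = P A.
Proof. by move=> mA; rewrite fineK ?fin_num_measure. Qed.

Lemma block_ratio_deviation_le (b n m : nat) (eps z : R) : (0 < n)%N -> 0 < eps ->
  fine (P [set w | eps < `|blockmax (Xn w) b (n + m) / blockmax (Xn w) b n - 1|])
  <= fine (P [set w | Mmax (fun k => X k) n w <= z])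
     + fine (P [set w | z < X 1 w]) *+ m.
Proof.
move=> n_gt0 eps_gt0.
set D := fun w => blockmax (Xn w) b (n + m).
set Dt := fun w => blockmax (Xn w) b n.
have Dt_gt0 w : 0 < Dt w by exact: lt_le_trans (X_pos _ w) (blockmax_ge_first _ _ _).
pose A := [set w | eps * Dt w < `|D w - Dt w|].
pose B := [set w | Dt w <= z].
pose U i := [set w | z < X (b + n + i.+1)%:Z w].
have -> : [set w | eps < `|D w / Dt w - 1|] = A.
  by apply/seteqP; split => w; rewrite /A /= ratio_deviation_gtE.
have mD : measurable_fun setT D := measurable_blockmax b (n + m).
have mDt : measurable_fun setT Dt := measurable_blockmax b n.
have mA : measurable A.
  apply: measurable_ltr; first exact: measurable_funM.
  by apply: measurableT_comp => //; exact: measurable_funB.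
have mB : measurable B by exact: measurable_ler.
have mU i : measurable (U i) by exact: measurable_ltr.
have mUm : measurable (\big[setU/set0]_(i < m) U i) by exact: bigsetU_measurable.
have A_sub : A `<=` B `|` \big[setU/set0]_(i < m) U i.
  move=> w /= Aw; have [|zDt] := leP (Dt w) z; [by left | right].
  rewrite -bigcup_mkord; apply: contrapT => noU.
  have tail_le i : (i < m)%N -> X (b + n + i.+1)%:Z w <= z.
    by move=> im; rewrite leNgt; apply/negP => Ui; apply: noU; exists i.
  move: Aw; rewrite /A /D /= (blockmax_catr zDt tail_le) subrr normr0.
  by rewrite ltNge mulr_ge0 // ltW.
have PA_le : (P A <= P B + \sum_(i < m) P (U i))%E.
  apply: le_trans (le_measure _ _ _ A_sub) _; rewrite ?inE //; first exact: measurableU.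
  apply: le_trans (measureU2 _ mB mUm) _.
  by rewrite leeD2l // Boole_inequality.
have mM : measurable [set w | Mmax (fun k => X k) n w <= z].
  exact: measurable_ler (measurable_blockmax 0 n) (measurable_cst z).
have mT : measurable [set w | z < X 1 w] by exact: measurable_ltr.
rewrite -lee_fin EFinD EFin_natmul (fine_probK mA) (fine_probK mM) (fine_probK mT).
apply: le_trans PA_le _; rewrite stationary_blockmax_le //.
rewrite (eq_bigr (fun=> P [set w | z < X 1 w])) => [|i _]; last exact: stationary_tail.
by rewrite sumr_const card_ord.
Qed.

Lemma Dblock_ratio_deviation_le m j k (eps z : R) : (m < 2 ^ j)%N -> 0 < eps ->
  fine (P [set w | eps < `|Dblock (fun i => X i) j k w / Dtblock (fun i => X i) m j k w - 1|])
  <= fine (P [set w | Mmax (fun k => X k) (2 ^ j - m) w <= z])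
     + fine (P [set w | z < X 1 w]) *+ m.
Proof.
move=> m_lt eps_gt0.
have n_gt0 : (0 < 2 ^ j - m)%N by rewrite subn_gt0.
have := block_ratio_deviation_le (2 ^ j * k.-1) m z n_gt0 eps_gt0.
by rewrite subnK // ltnW.
Qed.

End stationary_block_maxima.

Section powR_limits.
Context (R : realType).

Lemma powRVK (a y : R) : a != 0 -> 0 <= y -> (y `^ a^-1) `^ a = y.
Proof. by move=> a_neq0 y_ge0; rewrite -powRrM mulVf // powRr1. Qed.

Lemma expRN_lt_inv (y : R) : 0 < y -> expR (- y) < y^-1.
Proof.
move=> y_gt0; rewrite expRN ltf_pV2 ?posrE ?expR_gt0 //.
by have := expR_ge1Dx y; lra.
Qed.

Lemma cvgn_powR_pinfty (a : R) : 0 < a -> n%:R `^ a @[n --> \oo] --> +oo.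
Proof.
move=> a_gt0; apply/cvgryPge => A; near=> n.
have An : `|A| `^ a^-1 <= n%:R by near: n; exact: nbhs_infty_ger.
apply: le_trans (ler_norm A) _; rewrite -(@powRVK a `|A|) ?gt_eqF //.
by apply: ge0_ler_powR; rewrite ?nnegrE ?powR_ge0 // ltW.
Unshelve. all: end_near. Qed.

Lemma cvg_powR_rate (u : nat -> R) (l C beta : R) : 0 < beta ->
  (\forall n \near \oo, `|u n - l| <= C * n%:R `^ (- beta)) -> u @ \oo --> l.
Proof.
move=> beta_gt0 u_rate; apply/cvgrPdist_le => e e_gt0; near=> n.
have n_large : C / e <= n%:R `^ beta.
  by near: n; move/cvgryPge: (cvgn_powR_pinfty beta_gt0); apply.
have n_pos : 0 < n%:R `^ beta.
  by apply: powR_gt0; near: n; exact: nbhs_infty_gtr.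
rewrite distrC; apply: le_trans (_ : C * n%:R `^ (- beta) <= e); first by near: n.
by rewrite powRN -ler_pdivlMr ?invr_gt0 // invrK mulrC -ler_pdivrMr.
Unshelve. all: end_near. Qed.

Lemma exists_expR_powR_lt (a alpha e : R) : 0 < a -> 0 < alpha -> 0 < e ->
  exists2 x : R, 0 < x & expR (- (a * x `^ (- alpha))) < e.
Proof.
move=> a_gt0 alpha_gt0 e_gt0; exists ((a * e) `^ alpha^-1).
  by apply: powR_gt0; exact: mulr_gt0.
rewrite powRN powRVK ?gt_eqF ?mulr_ge0 ?ltW // invfM mulrA divff ?gt_eqF // mul1r.
by rewrite -[X in _ < X]invrK; apply: expRN_lt_inv; rewrite invr_gt0.
Qed.

End powR_limits.

Section maxima_and_tail_bounds.
Context d (T : measurableType d) (R : realType) (P : probability T R).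

Lemma cvgy_tail_prob (Y : {RV P >-> R}) :
  fine (P [set w | z < Y w]) @[z --> +oo] --> 0.
Proof.
have /fine_cvgP[_] := cvg_ccdfy0 Y; apply: cvg_trans; apply: near_eq_cvg.
near=> z; rewrite /= /ccdf /distribution /pushforward.
by congr (fine (P _)); apply/seteqP; split => w /=; rewrite in_itv /= andbT.
Unshelve. all: end_near. Qed.

Lemma cvgn_tail_prob_powR (Y : {RV P >-> R}) (a x : R) : 0 < a -> 0 < x ->
  fine (P [set w | n%:R `^ a * x < Y w]) @[n --> \oo] --> 0.
Proof.
move=> a_gt0 x_gt0; apply: (cvg_comp _ _ _ (cvgy_tail_prob Y)).
apply/cvgryPge => A; near=> n; rewrite -ler_pdivrMr //.
by near: n; move/cvgryPge: (cvgn_powR_pinfty a_gt0); apply.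
Unshelve. all: end_near. Qed.

Lemma condition1_Mmax_small (X : int -> T -> R) (alpha cX : R) :
  0 < alpha -> 0 < cX -> condition1 P X alpha cX ->
  forall e, 0 < e -> exists2 x, 0 < x &
    \forall n \near \oo, fine (P [set w | Mmax X n w <= n%:R `^ alpha^-1 * x]) < e.
Proof.
move=> alpha_gt0 cX_gt0 [c [c_Mmax [beta [r [theta [c1 cond]]]]]] e e_gt0.
move: cond => [beta_gt0 [/andP[theta_gt0 _] [_ [_ c_rate]]]].
have thcX_gt0 : 0 < theta * cX by rewrite mulr_gt0.
have thcX2_lt : theta * cX / 2 < theta * cX by rewrite ltr_pdivrMr // ltr_pMr // ltr1n.
have [x x_gt0 expR_lt] :=
  exists_expR_powR_lt (divr_gt0 thcX_gt0 (ltr0Sn R 1)) alpha_gt0 e_gt0.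
have c_cvg : c ^~ x @ \oo --> theta * cX.
  apply: (cvg_powR_rate (C := c1 x) beta_gt0); near=> n.
  by apply: c_rate => //; near: n; exact: nbhs_infty_gt.
exists x => //; near=> n; have n_gt0 : (0 < n)%N by near: n; exact: nbhs_infty_gt.
rewrite (c_Mmax n x n_gt0 x_gt0).2; apply: le_lt_trans expR_lt.
rewrite ler_expR lerN2 ler_wpM2r ?powR_ge0 //.
by near: n; exact: (cvgr_ge _ c_cvg _ thcX2_lt).
Unshelve. all: end_near. Qed.

End maxima_and_tail_bounds.

Lemma cvgn_expn2_subn m : (2 ^ j - m)%N @[j --> \oo] --> \oo.
Proof.
apply/cvgnyPge => A; near=> j.
have j_large : (A + m <= j)%N by near: j; exact: nbhs_infty_ge.
have := ltn_expl j (ltnSn 1); lia.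
Unshelve. all: end_near. Qed.

Theorem mainTheorem8 (d : measure_display) (T : measurableType d)
  (R : realType) (P : probability T R) (X : int -> {RV P >-> R})
  (alpha cX : R) (m : nat) :
  0 < alpha -> 0 < cX ->
  (forall k w, 0 < X k w) ->
  strictly_stationary P (fun k => X k) ->
  (forall k, regularly_varying_tail P (X k) alpha cX) ->
  condition1 P (fun k => X k) alpha cX ->
  forall k : nat, (0 < k)%N ->
    cvg_in_prob P
      (fun j w => Dblock (fun i => X i) j k w / Dtblock (fun i => X i) m j k w)
      1.
Proof.
move=> alpha_gt0 cX_gt0 X_pos X_stat _ cond1 k _ eps eps_gt0.
apply/cvgrPdist_lt => delta delta_gt0.
have delta2_gt0 : 0 < delta / 2 by rewrite divr_gt0.
have [x x_gt0 Mmax_small] := condition1_Mmax_small alpha_gt0 cX_gt0 cond1 delta2_gt0.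
pose z n := n%:R `^ alpha^-1 * x.
have tail_cvg : fine (P [set w | z n < X 1 w]) *+ m @[n --> \oo] --> 0.
  rewrite -(mul0rn _ m); apply: cvgMn; apply: cvgn_tail_prob_powR x_gt0.
  by rewrite invr_gt0.
near=> j.
have m_lt : (m < 2 ^ j)%N.
  by rewrite -subn_gt0; near: j; exact: cvgn_expn2_subn (nbhs_infty_gt 0).
rewrite sub0r normrN ger0_norm ?fine_ge0 ?measure_ge0 //.
apply: le_lt_trans (Dblock_ratio_deviation_le X_stat X_pos k (z (2 ^ j - m)%N) m_lt eps_gt0) _.
rewrite [delta]splitr ltrD //; near: j; first exact: cvgn_expn2_subn Mmax_small.
exact: cvgn_expn2_subn (cvgr_lt _ tail_cvg _ delta2_gt0).
Unshelve. all: end_near. Qed.
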